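(* Let $a,b$ be integers with $0<b<a$, let $S=\langle a,a+1,\ldots,a+b\rangle$ with conductor $c$, and let $m\ge 2c-1$. Let $0=i_0<i_1<\cdots<i_t<i_{t+1}<a+b$ be integers such that $\{m,m+i_1,\ldots,m+i_{t+1}\}$ is amenable. Then $$\mathrm D(m,m+i_1,\ldots,m+i_{t+1})=\mathrm D(m,m+i_1,\ldots,m+i_t)\cup\{m-(ka+r)\mid a-i_{t+1}\le r\le a-1-i_t,\ 0<r-kb\le (a+b)-i_{t+1}\},$$ where $k,r$ range over integers.
   Context: The conductor $c$ of a numerical semigroup $S$ is the least element of $S$ with $c+n\in S$ for all $n\in\mathbb N$. For $x\in S$, $\mathrm D(x)=\{\alpha\in S\mid x-\alpha\in S\}$, and $\mathrm D(x_1,\ldots,x_t)=\mathrm D(x_1)\cup\cdots\cup\mathrm D(x_t)$. A set $M=\{m_1<\cdots<m_s\}\subseteq S$ with $2c-1\le m=m_1$ is amenable if $\mathrm D(m_i)\cap[m,\infty)\subseteq M$ for all $i$. *)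

From mathcomp Require Import all_boot all_order all_algebra.
Set Implicit Arguments. Unset Strict Implicit. Unset Printing Implicit Defensive.

Definition inS (a b n : nat) : Prop :=
  exists s : seq nat, all (fun g => (a <= g <= a + b)%N) s /\ sumn s = n.

Definition is_conductor (a b c : nat) : Prop :=
  [/\ inS a b c, (forall n, inS a b (c + n)) &
      (forall c', inS a b c' -> (forall n, inS a b (c' + n)) -> (c <= c')%N)].

(* D(x) = { alpha in S | x - alpha in S } (elements of S are naturals). *)
Definition Dset (a b x alpha : nat) : Prop :=
  [/\ inS a b alpha, (alpha <= x)%N & inS a b (x - alpha)].

Definition Dsetl (a b : nat) (xs : seq nat) (alpha : nat) : Prop :=
  exists2 x, x \in xs & Dset a b x alpha.

Definition amenable (a b c : nat) (M : seq nat) : Prop :=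
  exists m, [/\ m \in M, (forall x, x \in M -> (m <= x)%N),
    (2 * c - 1 <= m)%N, (forall x, x \in M -> inS a b x) &
    (forall x alpha, x \in M -> Dset a b x alpha -> (m <= alpha)%N -> alpha \in M)].

From mathcomp Require Import all_boot all_order all_algebra.
From mathcomp Require Import zify.
Import Order.TTheory GRing.Theory Num.Theory.

Set Implicit Arguments.
Unset Strict Implicit.
Unset Printing Implicit Defensive.

(* S is the union of the windows [q a, q (a + b)].  Write I = i_(t+1),
   J = i_t and beta = (m + I) - x for x in D(m + I), with beta in the window
   of q.  If beta - (I - J) is still in that window, x lies in D(m + J).  If
   beta + a + b <= q (a + b) + I, either beta - I lies in the window of q - 1
   (so x is in D(m)), or some generator e <= I leaves beta - e in that
   window; amenability puts m + I - e into M, so it is an m + i_j with j <= t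
   and x lies in D(m + i_j).  The remaining beta are exactly the k a + r + I of
   the statement, with q = k + 1; for them m + I - beta lies above the
   conductor, since q a - 1 is a gap of S and hence c >= q a. *)

Lemma inSP a b n : inS a b n <-> exists q, (q * a <= n <= q * (a + b))%N.
Proof.
split.
- case=> s [s_gen <-]; exists (size s).
  elim: s s_gen => [|g s IH] //= /andP[/andP[ag gab] /IH /andP[h1 h2]].
  rewrite !mulSn; lia.
- case=> q; elim: q n => [|q IH] n.
  + by rewrite !mul0n => n0; exists [::]; split => //=; lia.
  + rewrite !mulSn => n_win.
    (* split off one generator, as large as possible *)
    set g := minn (a + b) (n - q * a).
    have [s [s_gen s_sum]] := IH (n - g) ltac:(lia).
    by exists (g :: s); split => /=; [rewrite s_gen andbT | rewrite s_sum]; lia.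
Qed.

Lemma mem_map_iotaP (f : nat -> nat) n y :
  y \in [seq f j | j <- iota 0 n] <-> exists2 j, (j < n)%N & y = f j.
Proof.
split; first by case/mapP=> j; rewrite mem_iota => /andP[_ jn] ->; exists j.
by case=> j jn ->; apply/mapP; exists j; rewrite ?mem_iota.
Qed.

Lemma Dsetl_map_iotaP a b (f : nat -> nat) n x :
  Dsetl a b [seq f j | j <- iota 0 n] x <-> exists2 j, (j < n)%N & Dset a b (f j) x.
Proof.
split; first by case=> y /mem_map_iotaP[j jn ->] Dx; exists j.
by case=> j jn Dx; exists (f j) => //; apply/mem_map_iotaP; exists j.
Qed.

(* With I = i_(t+1) and J = i_t, the elements x of D(m + I) outside the
   D(m + i_j), j <= t, are the m + I - beta with beta a new difference. *)
Definition new_difference (a b I J beta : nat) : Prop :=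
  exists q, [/\ (q * a <= beta)%N, (beta < q * a + (I - J))%N,
                (beta <= q * (a + b))%N & (q * (a + b) + I < beta + a + b)%N].

Lemma new_difference_intP (a b m I J : nat) (z : int) :
  (0 < b)%N ->
  (exists k r : int,
     [/\ ((Posz a) - Posz I <= r)%R, (r <= (Posz a) - 1 - Posz J)%R,
         (0 < r - k * (Posz b))%R, (r - k * (Posz b) <= Posz (a + b) - Posz I)%R
       & z = ((Posz m) - (k * (Posz a) + r))%R])
  <-> exists2 beta, new_difference a b I J beta & z = (Posz (m + I) - Posz beta)%R.
Proof.
move=> b_gt0; split.
- case=> k [r [r_ge r_le kr_gt0 kr_le ->]].
  (* q = k + 1 and beta = k a + r + I; k >= -1 because b > 0 *)
  have [q k_eq] : exists q : nat, k = (Posz q - 1)%R.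
    exists `|(k + 1)%R|%N; rewrite gez0_abs; first lia.
    by case: k kr_gt0 kr_le => [p|[|n]]; rewrite ?NegzE ?mulNr -?PoszM ?mulSn; lia.
  have [s r_eq] : exists s : nat, r = (Posz s + Posz a - Posz I)%R.
    by exists `|(r + Posz I - Posz a)%R|%N; rewrite gez0_abs; lia.
  move: r_ge r_le kr_gt0 kr_le; rewrite k_eq r_eq !mulrBl !mul1r -!PoszM => *.
  exists (q * a + s)%N; last lia.
  by exists q; rewrite mulnDr; split; lia.
- case=> beta [q [qa_le beta_lt beta_le beta_gt]] ->.
  exists (Posz q - 1)%R, (Posz beta - Posz (q * a) + Posz a - Posz I)%R.
  rewrite mulrBl mul1r -!PoszM; rewrite mulnDr in beta_le beta_gt; split; lia.
Qed.

Section Conductor.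

Variables a b c : nat.
Hypothesis conductor : is_conductor a b c.

Lemma inS_geq_conductor n : (c <= n)%N -> inS a b n.
Proof. by case: conductor => _ c_add _ cn; rewrite -(subnKC cn); apply: c_add. Qed.

Lemma notin_S_gap p n : (p * (a + b) < n < p.+1 * a)%N -> ~ inS a b n.
Proof.
move=> n_gap /inSP[q /andP[qa_le le_qab]].
case: (leqP q p) => [qp | pq].
- have : (q * (a + b) <= p * (a + b))%N by rewrite leq_mul2r qp orbT.
  lia.
- have : (p.+1 * a <= q * a)%N by rewrite leq_mul2r pq orbT.
  lia.
Qed.

Lemma gap_lt_conductor n : ~ inS a b n -> (n < c)%N.
Proof. by move=> nS; rewrite ltnNge; apply/negP => /inS_geq_conductor. Qed.

Lemma new_difference_Dset m I J beta :
  (2 * c - 1 <= m)%N -> new_difference a b I J beta ->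
  (beta <= m + I)%N /\ Dset a b (m + I) (m + I - beta).
Proof.
move=> m_ge [q [qa_le beta_lt beta_le beta_gt]].
have qa_le_c : (q * a <= c)%N.
  case: q qa_le beta_lt beta_le beta_gt => [|p]; first by rewrite mul0n.
  rewrite !mulSn => *.
  suff : (a + p * a - 1 < c)%N by lia.
  apply/gap_lt_conductor/(@notin_S_gap p); rewrite mulSn; lia.
split; first lia.
split; [apply: inS_geq_conductor; lia | lia |].
by rewrite subKn; [apply/inSP; exists q; lia | lia].
Qed.

Variables (m t : nat) (i : nat -> nat).
Hypotheses (a_gt0 : (0 < a)%N) (m_ge : (2 * c - 1 <= m)%N) (i0 : i 0%N = 0%N).
Hypotheses (i_incr : forall j, (j <= t)%N -> (i j < i j.+1)%N)
           (i_last : (i t.+1 < a + b)%N).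
Hypothesis amenable_M : amenable a b c [seq (m + i j)%N | j <- iota 0 t.+2].

Lemma amenable_closed x alpha :
  (exists2 j, (j < t.+2)%N & x = m + i j) -> Dset a b x alpha -> (m <= alpha)%N ->
  exists2 j, (j < t.+2)%N & alpha = m + i j.
Proof.
case: amenable_M => m0 [/mem_map_iotaP[j _ ->] m0_min _ _ M_closed].
move=> /mem_map_iotaP xM Dx m_le; apply/mem_map_iotaP; apply: (M_closed x) => //.
suff m0_eq : m + i j = m by rewrite m0_eq.
apply/eqP; rewrite eqn_leq leq_addr m0_min //.
by apply/mem_map_iotaP; exists 0%N; rewrite ?i0 ?addn0.
Qed.

Lemma Dset_last x :
  Dset a b (m + i t.+1) x ->
  (exists2 j, (j < t.+1)%N & Dset a b (m + i j) x) \/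
  new_difference a b (i t.+1) (i t) (m + i t.+1 - x).
Proof.
have JI := i_incr (leqnn t); move: i_last JI.
set I := i t.+1; set J := i t => I_lt JI [xS x_le].
set beta := m + I - x => /inSP[q /andP[qa_le le_qab]].
case: (leqP (q * a + (I - J)) beta) => [beta_high | beta_low].
  left; exists t => //; split => //; first lia.
  by apply/inSP; exists q; lia.
case: (ltnP (q * (a + b) + I) (beta + a + b)) => [beta_top | beta_le].
  by right; exists q.
case: q qa_le le_qab beta_low beta_le => [|p]; first by rewrite !mul0n; lia.
have pa_le : (p * a <= p * (a + b))%N by rewrite leq_mul2l leq_addr orbT.
rewrite !mulSn => qa_le le_qab beta_low beta_le.
case: (leqP (p * a + I) beta) => [beta_ge | beta_lt].
  left; exists 0%N => //; rewrite i0 addn0; split => //; first lia.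
  by apply/inSP; exists p; lia.
(* e is a generator with beta - e in the window of p, and m <= m + I - e *)
set e := maxn a (beta - p * (a + b)).
have De : Dset a b (m + I) (m + I - e).
  split; [apply: inS_geq_conductor; lia | lia |].
  by rewrite subKn; [apply/inSP; exists 1%N; lia | lia].
have [j jt ej] : exists2 j, (j < t.+2)%N & m + I - e = m + i j.
  by apply: (@amenable_closed _ _ _ De); [exists t.+1 | lia].
have j_le : (j < t.+1)%N.
  rewrite ltnS leq_eqVlt in jt; case/orP: jt => [/eqP jt1 | //].
  by move: ej; rewrite jt1 -/I; lia.
left; exists j => //; rewrite -ej; split => //; first lia.
by apply/inSP; exists p; lia.
Qed.

End Conductor.

Theorem lemma4p4 (a b c m t : nat) (i : nat -> nat) :
  (0 < b)%N -> (b < a)%N ->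
  is_conductor a b c ->
  (2 * c - 1 <= m)%N ->
  i 0%N = 0%N ->
  (forall j, (j <= t)%N -> (i j < i j.+1)%N) ->
  (i t.+1 < a + b)%N ->
  amenable a b c [seq (m + i j)%N | j <- iota 0 t.+2] ->
  forall z : int,
    (exists2 x : nat, z = (Posz x) & Dsetl a b [seq (m + i j)%N | j <- iota 0 t.+2] x)
    <->
    ((exists2 x : nat, z = (Posz x) & Dsetl a b [seq (m + i j)%N | j <- iota 0 t.+1] x)
     \/ exists k r : int,
          [/\ ((Posz a) - Posz (i t.+1) <= r)%R, (r <= (Posz a) - 1 - Posz (i t))%R,
              (0 < r - k * (Posz b))%R, (r - k * (Posz b) <= Posz (a + b) - Posz (i t.+1))%R
            & z = ((Posz m) - (k * (Posz a) + r))%R]).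
Proof.
move=> b_gt0 b_lt_a conductor m_ge i0 i_incr i_last amenable_M z.
have a_gt0 : (0 < a)%N by apply: leq_trans b_lt_a.
rewrite new_difference_intP //.
split.
- case=> x -> /Dsetl_map_iotaP[j]; rewrite ltnS leq_eqVlt => /orP[/eqP -> | jt] Dx.
  + case: (Dset_last conductor a_gt0 m_ge i0 i_incr i_last amenable_M Dx) => [Dx' | beta_new].
      by left; exists x => //; apply/Dsetl_map_iotaP.
    right; exists (m + i t.+1 - x) => //.
    by have [_ x_le _] := Dx; lia.
  + by left; exists x => //; apply/Dsetl_map_iotaP; exists j.
- case=> [[x -> /Dsetl_map_iotaP[j jt Dx]] | [beta beta_new ->]].
    by exists x => //; apply/Dsetl_map_iotaP; exists j => //; apply: ltnW.
  have [beta_le Dx] := new_difference_Dset conductor m_ge beta_new.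
  exists (m + i t.+1 - beta)%N; first by rewrite subzn.
  by apply/Dsetl_map_iotaP; exists t.+1.
Qed.
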